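(* Let $G$ be a hypo-efficient domination graph having at least one $\gamma$-critical vertex. Then \[(\delta(G)+1)(\gamma(G)-1)+1\leq |V(G)|\leq(\Delta(G)+1)(\gamma(G)-1)+1.\]
   Context: All graphs are finite, simple and undirected. For $v\in V(G)$, $N[v]$ is the closed neighborhood of $v$. A set $D\subseteq V(G)$ is dominating if every vertex of $G$ not in $D$ has a neighbor in $D$; $\gamma(G)$ is the minimum size of a dominating set. A vertex $v$ is $\gamma$-critical if $\gamma(G-v)<\gamma(G)$. A set $D\subseteq V(H)$ is an efficient dominating set (EDS) of $H$ if $|N_H[v]\cap D|=1$ for every $v\in V(H)$. $G$ is a hypo-efficient domination graph if $G$ has no EDS but $G-v$ has at least one EDS for every $v\in V(G)$. $\delta(G)$, $\Delta(G)$ are the minimum and maximum degree. *)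

From mathcomp Require Import all_boot all_order.
Set Implicit Arguments. Unset Strict Implicit. Unset Printing Implicit Defensive.

Section Graphs.
Variable T : finType.
Variable e : rel T.

Definition simple_graph := symmetric e /\ irreflexive e.

(* closed neighbourhood of v in the induced subgraph G[S] *)
Definition cnbhd (S : {set T}) (v : T) : {set T} :=
  [set u in S | (u == v) || e v u].

Definition deg (v : T) : nat := #|[set u | e v u]|.
Definition mindeg : nat := \big[minn/#|T|]_(v : T) deg v.
Definition maxdeg : nat := \max_(v : T) deg v.

Definition dominating (S D : {set T}) : bool :=
  (D \subset S) && [forall x in S, (x \in D) || [exists y in D, e x y]].

(* domination number of G[S] (S itself is dominating, so this is the minimum) *)
Definition gamma (S : {set T}) : nat :=
  \big[minn/#|S|]_(D : {set T} | dominating S D) #|D|.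

Definition eds (S D : {set T}) : bool :=
  (D \subset S) && [forall v in S, #|cnbhd S v :&: D| == 1].

Definition has_eds (S : {set T}) : bool := [exists D, eds S D].

Definition hypo_efficient : Prop :=
  ~~ has_eds setT /\ forall v : T, has_eds (setT :\ v).

Definition gamma_critical (v : T) : bool := gamma (setT :\ v) < gamma setT.

End Graphs.

From mathcomp Require Import all_boot all_order.
From mathcomp Require Import zify.
Set Implicit Arguments. Unset Strict Implicit. Unset Printing Implicit Defensive.

(* Removing a vertex v leaves an efficient dominating set D of G - v.  Counting
   the closed neighbourhoods of D shows that D is a minimum dominating set of
   G - v, so gamma(G - v) = |D|; criticality of v then forces gamma(G) = |D| + 1,
   which in turn forbids any edge from D to v (otherwise D would dominate G).
   Hence the closed neighbourhoods N[d], d in D, partition V(G) - v, and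
   |V(G)| = 1 + sum_(d in D) (deg d + 1) lies between 1 + |D|(delta + 1) and
   1 + |D|(Delta + 1). *)

Lemma bigmin_le (I : eqType) (r : seq I) (P : pred I) (F : I -> nat) x j :
  j \in r -> P j -> \big[minn/x]_(i <- r | P i) F i <= F j.
Proof.
elim: r => [//|a r IH]; rewrite inE big_cons => /orP [/eqP <- -> | jr Pj].
  exact: geq_minl.
case: (P a); last exact: IH.
exact: leq_trans (geq_minr _ _) (IH jr Pj).
Qed.

Section EfficientDomination.
Variable T : finType.
Variable e : rel T.
Hypothesis e_sym : symmetric e.

Lemma mindeg_le d : mindeg e <= deg e d.
Proof. by apply: bigmin_le; rewrite ?mem_index_enum. Qed.

Lemma maxdeg_ge d : deg e d <= maxdeg e.
Proof. exact: leq_bigmax. Qed.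

Lemma gamma_le (S D : {set T}) : dominating e S D -> gamma e S <= #|D|.
Proof. by move=> domD; apply: bigmin_le; rewrite ?mem_index_enum. Qed.

Lemma gamma_ge (S : {set T}) k :
  k <= #|S| -> (forall D, dominating e S D -> k <= #|D|) -> k <= gamma e S.
Proof.
move=> leS leD; apply: (big_ind (fun x => k <= x)) => //.
by move=> x y; rewrite leq_min => -> ->.
Qed.

Lemma dominatingP (S D : {set T}) :
  reflect (D \subset S /\
           forall x, x \in S -> (x \in D) \/ exists2 y, y \in D & e x y)
          (dominating e S D).
Proof.
apply: (iffP andP) => [[-> /forallP domD] | [-> domD]]; split=> //.
  move=> x /(implyP (domD x)) /orP [xD | /existsP [y /andP [yD exy]]];
    [by left | by right; exists y].
apply/forallP => x; apply/implyP => /domD [-> // | [y yD exy]].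
by apply/orP; right; apply/existsP; exists y; rewrite yD.
Qed.

Lemma dominating_setD1 (S D D' : {set T}) v :
  dominating e (S :\ v) D -> D \subset D' -> D' \subset S ->
  (v \in D') \/ (exists2 y, y \in D' & e v y) -> dominating e S D'.
Proof.
move=> /dominatingP [_ domD] /subsetP sDD' sD'S domv; apply/dominatingP.
split=> // x xS; have [-> // | xv] := eqVneq x v.
have xSv : x \in S :\ v by rewrite !inE xv.
have [xD | [y yD exy]] := domD x xSv.
  by left; apply: sDD'.
by right; exists y; first apply: sDD'.
Qed.

Lemma cnbhd_double_count (S A B : {set T}) : A \subset S -> B \subset S ->
  \sum_(y in A) #|cnbhd e S y :&: B| = \sum_(x in B) #|cnbhd e S x :&: A|.
Proof.
move=> /subsetP sAS /subsetP sBS.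
have cardI (C E : {set T}) : #|C :&: E| = \sum_(x in E) (x \in C).
  rewrite -sum1_card big_mkcond [RHS]big_mkcond /=; apply: eq_bigr => x _.
  by rewrite inE andbC; case: (x \in E); case: (x \in C).
under eq_bigr => y _ do rewrite cardI.
under [RHS]eq_bigr => x _ do rewrite cardI.
rewrite exchange_big /=; apply: eq_bigr => x xB; apply: eq_bigr => y yA.
by rewrite !inE (sAS y yA) (sBS x xB) /= eq_sym e_sym.
Qed.

Lemma sum_deg_bounds (A : {set T}) :
  (mindeg e + 1) * #|A| <= \sum_(d in A) (deg e d).+1 <= (maxdeg e + 1) * #|A|.
Proof.
apply/andP; split; rewrite mulnC -sum_nat_const; apply: leq_sum => d _;
  by rewrite addn1 ltnS ?mindeg_le ?maxdeg_ge.
Qed.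

Section EfficientDominatingSet.
Variables S D : {set T}.
Hypothesis edsD : eds e S D.

Lemma eds_sub : D \subset S.
Proof. by case/andP: edsD. Qed.

Lemma eds_cnbhdI x : x \in S -> #|cnbhd e S x :&: D| = 1.
Proof. by case/andP: edsD => _ /forallP /(_ x) /implyP H /H /eqP. Qed.

Lemma eds_dominating : dominating e S D.
Proof.
apply/dominatingP; split=> [|x xS]; first exact: eds_sub.
have /card_gt0P [y] : 0 < #|cnbhd e S x :&: D| by rewrite eds_cnbhdI.
rewrite !inE => /andP [/andP [_ /orP [/eqP -> | exy]] yD]; first by left.
by right; exists y.
Qed.

Lemma card_eds_sum (A : {set T}) :
  A \subset S -> #|A| = \sum_(y in A) #|cnbhd e S y :&: D|.
Proof.
move=> /subsetP sAS; rewrite -sum1_card.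
by apply: eq_bigr => y yA; rewrite eds_cnbhdI ?sAS.
Qed.

(* Each vertex of S sees exactly one vertex of D, while each vertex of D
   sees at least one vertex of a dominating set D'. *)
Lemma eds_minimum (D' : {set T}) : dominating e S D' -> #|D| <= #|D'|.
Proof.
move=> /dominatingP [sD'S domD']; have sDS := eds_sub.
rewrite (card_eds_sum sD'S) cnbhd_double_count // -sum1_card.
apply: leq_sum => d dD; apply/card_gt0P.
have dS := subsetP sDS d dD.
have [dD' | [y yD' edy]] := domD' d dS.
  by exists d; rewrite !inE dD' dS eqxx.
by exists y; rewrite !inE yD' edy (subsetP sD'S y yD') orbT.
Qed.

Lemma gamma_eds : gamma e S = #|D|.
Proof.
apply/eqP; rewrite eqn_leq gamma_le ?eds_dominating //=.
by apply: gamma_ge; [apply: subset_leq_card; apply: eds_sub | apply: eds_minimum].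
Qed.

Lemma card_eds_partition : #|S| = \sum_(d in D) #|cnbhd e S d|.
Proof.
rewrite {1}(card_eds_sum (subxx S)) cnbhd_double_count ?eds_sub //.
apply: eq_bigr => d _; suff /setIidPl -> : cnbhd e S d \subset S by [].
by apply/subsetP => u; rewrite inE => /andP [].
Qed.

End EfficientDominatingSet.

Lemma card_cnbhdT d : irreflexive e -> #|cnbhd e setT d| = (deg e d).+1.
Proof.
move=> irr; have -> : cnbhd e setT d = d |: [set u | e d u].
  by apply/setP => u; rewrite !inE.
by rewrite cardsU1 inE irr.
Qed.

Lemma cnbhd_setD1 (S : {set T}) v d :
  d != v -> ~~ e d v -> cnbhd e (S :\ v) d = cnbhd e S d.
Proof.
move=> dv ndv; apply/setP => u; rewrite !inE.
have [-> | _] //= := eqVneq u v.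
by rewrite eq_sym (negbTE dv) (negbTE ndv) andbF.
Qed.

Section CriticalVertex.
Variables (v : T) (D : {set T}).
Hypotheses (edsD : eds e (setT :\ v) D) (crit : gamma_critical e v).

Lemma gamma_critical_eds : gamma e setT = #|D|.+1.
Proof.
have gt_gamma : #|D| < gamma e setT by rewrite -(gamma_eds edsD).
apply/eqP; rewrite eqn_leq gt_gamma andbT.
apply: (@leq_trans #|v |: D|); last by rewrite cardsU1 -add1n leq_add2r leq_b1.
apply/gamma_le/(dominating_setD1 (eds_dominating edsD) (subsetUr _ _) (subsetT _)).
by left; rewrite setU11.
Qed.

Lemma eds_critical_nonadj d : d \in D -> ~~ e d v.
Proof.
move=> dD; apply/negP => edv.
have domT : dominating e setT D.
  apply: dominating_setD1 (eds_dominating edsD) (subxx D) (subsetT D) _.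
  by right; exists d; rewrite // e_sym.
by have := gamma_le domT; rewrite gamma_critical_eds ltnn.
Qed.

Lemma card_critical_eds :
  irreflexive e -> #|T| = (\sum_(d in D) (deg e d).+1).+1.
Proof.
move=> irr; rewrite -cardsT (cardsD1 v) inE add1n (card_eds_partition edsD).
congr _.+1; apply: eq_bigr => d dD.
have : d \in setT :\ v := subsetP (eds_sub edsD) d dD.
by rewrite !inE andbT => dv; rewrite cnbhd_setD1 ?eds_critical_nonadj ?card_cnbhdT.
Qed.

End CriticalVertex.

End EfficientDomination.

Theorem theorem3p16 (T : finType) (e : rel T) :
  simple_graph e -> hypo_efficient e ->
  (exists v : T, gamma_critical e v) ->
  (mindeg e + 1) * (gamma e setT - 1) + 1 <= #|T| /\
  #|T| <= (maxdeg e + 1) * (gamma e setT - 1) + 1.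
Proof.
move=> [e_sym irr] [_ eds_minus] [v crit].
have /existsP [D edsD] := eds_minus v.
rewrite (card_critical_eds e_sym edsD crit irr) (gamma_critical_eds e_sym edsD crit).
have /andP := sum_deg_bounds e D; lia.
Qed.
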